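(* Let $g$ be a consistent piece-wise quadratic function with pieces $p_1,\dots,p_N$ and breakpoints $-\infty=\tau_0<\tau_1<\dots<\tau_N=+\infty$. For $\beta\in\mathbb{R}$ and $k\in\{1,\dots,N\}$ let $\ell_{k;\beta}(\alpha)=\beta\alpha-p_k^*(\beta)$, where $p_k^*(\beta)=\sup_\alpha\{\beta\alpha-p_k(\alpha)\}$. Fix $\beta\in\mathbb{R}$, let $\alpha^\star(\beta)\in\arg\max_\alpha\{\beta\alpha-g(\alpha)\}$, and let $k^*$ be such that $\tau_{k^*-1}\le\alpha^\star(\beta)\le\tau_{k^*}$. Then (1) $\alpha^\star(\beta)\notin\{\tau_{k^*-1},\tau_{k^*}\}$; and (2) $\ell_{k^*;\beta}(\alpha^\star(\beta))=g(\alpha^\star(\beta))$ and $\ell_{k^*;\beta}(\alpha)\le g(\alpha)$ for every $\alpha\in\mathbb{R}$.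
   Context: A continuous $g$ is piece-wise quadratic with $N$ pieces if $g=p_k$ on $[\tau_{k-1},\tau_k]$ for quadratic functions $p_k$ with $p_k\ne p_{k+1}$ as functions; it is consistent if every $p_k$ is strongly convex and $g=\min_kp_k$ on $\mathbb{R}$. *)

From Stdlib Require Import Reals.
From Coquelicot Require Import Coquelicot.
Open Scope R_scope.

Record quad := Quad { qa : R; qb : R; qc : R }.

Definition qeval (p : quad) (x : R) : R := qa p * x ^ 2 + qb p * x + qc p.

Definition strongly_convex (p : quad) : Prop := 0 < qa p.

Definition in_piece (tau : nat -> Rbar) (k : nat) (x : R) : Prop :=
  Rbar_le (tau (k - 1)%nat) (Finite x) /\ Rbar_le (Finite x) (tau k).

Definition piecewise_quadratic (g : R -> R) (N : nat) (p : nat -> quad)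
  (tau : nat -> Rbar) : Prop :=
  (1 <= N)%nat /\
  continuity g /\
  tau 0%nat = m_infty /\ tau N = p_infty /\
  (forall i, (i < N)%nat -> Rbar_lt (tau i) (tau (S i))) /\
  (forall k x, (1 <= k <= N)%nat -> in_piece tau k x -> g x = qeval (p k) x) /\
  (forall k, (1 <= k < N)%nat -> qeval (p k) <> qeval (p (S k))).

Definition consistent (g : R -> R) (N : nat) (p : nat -> quad) : Prop :=
  (forall k, (1 <= k <= N)%nat -> strongly_convex (p k)) /\
  (forall x, (forall k, (1 <= k <= N)%nat -> g x <= qeval (p k) x) /\
             (exists k, (1 <= k <= N)%nat /\ g x = qeval (p k) x)).

Definition conj_fun (f : R -> R) (beta : R) : Rbar :=
  Lub_Rbar (fun y => exists a, y = beta * a - f a).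

(* l_{k;beta}(alpha) = beta alpha - p_k^*(beta); p_k^*(beta) is finite for
   strongly convex p_k, so we take its real part. *)
Definition ell (p : nat -> quad) (k : nat) (beta alpha : R) : R :=
  beta * alpha - real (conj_fun (qeval (p k)) beta).

(* If the maximiser [t] of [beta a - g a] sat at an inner breakpoint between
   pieces [P] and [Q], maximality would give [P'(t) <= beta <= Q'(t)], while
   [g = min_k p_k] forces [P <= Q] left of [t] and [Q <= P] right of it, hence
   [Q'(t) <= P'(t)]. So [P - Q] vanishes at [t] to first order and changes
   sign there, which for a quadratic means [P = Q], contradicting [p_k <> p_(k+1)].
   Inside a piece, maximality gives [p_k'(t) = beta]; a convex quadratic lies
   above its tangent, so [p_k^*(beta) = beta t - p_k(t)] and [ell] is the
   tangent line of [g] at [t], which lies below [g] by maximality again. *)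
From Stdlib Require Import Reals Lra Lia Psatz FunctionalExtensionality.
From Coquelicot Require Import Coquelicot.
Open Scope R_scope.

Definition qderiv (P : quad) (t : R) : R := 2 * qa P * t + qb P.

Lemma qeval_taylor (P : quad) (t x : R) :
  qeval P x = qeval P t + qderiv P t * (x - t) + qa P * (x - t) ^ 2.
Proof. unfold qeval, qderiv; ring. Qed.

Lemma qeval_ext (P Q : quad) (t : R) :
  qa P = qa Q -> qderiv P t = qderiv Q t -> qeval P t = qeval Q t ->
  qeval P = qeval Q.
Proof.
  intros Ea Ed Ev; apply functional_extensionality; intros x.
  rewrite (qeval_taylor P t x), (qeval_taylor Q t x), Ea, Ed, Ev; reflexivity.
Qed.

Lemma linear_coef_nonneg (A B d : R) : 0 < d ->
  (forall s, 0 < s < d -> 0 <= A * s ^ 2 + B * s) -> 0 <= B.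
Proof.
  intros Hd H; destruct (Rle_or_lt 0 B) as [HB | HB]; [exact HB | exfalso].
  set (c := 2 * (Rabs A + 1)).
  assert (HA : A <= Rabs A) by apply Rle_abs.
  assert (Hc : 0 < c) by (unfold c; pose proof (Rabs_pos A); lra).
  set (s := Rmin (d / 2) (- B / c)).
  pose proof (Rmin_l (d / 2) (- B / c)) as Hsl; pose proof (Rmin_r (d / 2) (- B / c)) as Hr.
  fold s in Hsl, Hr.
  assert (Hs : 0 < s) by (apply Rmin_glb_lt; [lra | apply Rdiv_lt_0_compat; lra]).
  assert (Hsd : s < d) by lra.
  assert (Hsc : s * c <= - B).
  {
    apply (Rmult_le_compat_r c) in Hr; [| lra].
    unfold Rdiv in Hr; rewrite Rmult_assoc, Rinv_l, Rmult_1_r in Hr; lra. }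
  specialize (H s (conj Hs Hsd)); unfold c in Hsc; nra.
Qed.

(* The slope hypothesis is essential: without it [P - Q] could be a linear
   function vanishing at [t]. *)
Lemma qeval_eq_of_crossing (P Q : quad) (t dL dR : R) :
  0 < dL -> 0 < dR ->
  qeval P t = qeval Q t -> qderiv P t <= qderiv Q t ->
  (forall x, t - dL < x < t -> qeval P x <= qeval Q x) ->
  (forall x, t < x < t + dR -> qeval Q x <= qeval P x) ->
  qeval P = qeval Q.
Proof.
  intros HdL HdR Ev Ed Hleft Hright.
  set (A := qa P - qa Q); set (B := qderiv P t - qderiv Q t).
  assert (Hdiff : forall x, qeval P x - qeval Q x = B * (x - t) + A * (x - t) ^ 2).
  { intros x; rewrite (qeval_taylor P t x), (qeval_taylor Q t x), Ev.
    unfold A, B; ring. }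
  assert (HB : 0 <= B).
  { apply (linear_coef_nonneg (- A) B dL HdL); intros s Hs.
    specialize (Hleft (t - s) ltac:(lra)); specialize (Hdiff (t - s)).
    replace (t - s - t) with (- s) in Hdiff by ring; nra. }
  assert (B0 : B = 0) by (unfold B in *; lra).
  assert (Hsq : forall s, s <> 0 -> 0 < s ^ 2) by (intros s Hs; nra).
  assert (HAle : A <= 0).
  { specialize (Hleft (t - dL / 2) ltac:(lra)); specialize (Hdiff (t - dL / 2)).
    specialize (Hsq (t - dL / 2 - t) ltac:(lra)); rewrite B0 in Hdiff; nra. }
  assert (HAge : 0 <= A).
  { specialize (Hright (t + dR / 2) ltac:(lra)); specialize (Hdiff (t + dR / 2)).
    specialize (Hsq (t + dR / 2 - t) ltac:(lra)); rewrite B0 in Hdiff; nra. }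
  apply (qeval_ext P Q t); unfold A, B in *; lra.
Qed.

Lemma conj_qeval_critical (P : quad) (beta t : R) :
  0 <= qa P -> qderiv P t = beta ->
  conj_fun (qeval P) beta = Finite (beta * t - qeval P t).
Proof.
  intros Ha Hd; apply is_lub_Rbar_unique; split.
  - intros y [a ->]; simpl; rewrite (qeval_taylor P t a), Hd.
    pose proof (pow2_ge_0 (a - t)); nra.
  - intros b Hb; apply Hb; exists t; reflexivity.
Qed.

Lemma Rbar_lt_left_nbhd (L : Rbar) (t : R) : Rbar_lt L t ->
  exists d, 0 < d /\ forall x, t - d < x -> Rbar_le L x.
Proof.
  destruct L as [l | |]; simpl; intros H; try contradiction.
  - exists (t - l); split; [lra | intros x Hx; simpl; lra].
  - exists 1; split; [lra | intros; exact I].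
Qed.

Lemma Rbar_lt_right_nbhd (U : Rbar) (t : R) : Rbar_lt t U ->
  exists d, 0 < d /\ forall x, x < t + d -> Rbar_le x U.
Proof.
  destruct U as [u | |]; simpl; intros H; try contradiction.
  - exists (u - t); split; [lra | intros x Hx; simpl; lra].
  - exists 1; split; [lra | intros; exact I].
Qed.

Section ArgmaxSlope.

Variables (g : R -> R) (beta t : R).
Hypothesis Hargmax : forall a, beta * a - g a <= beta * t - g t.

Lemma argmax_slope_left (P : quad) (d : R) : 0 < d ->
  (forall x, t - d < x <= t -> g x = qeval P x) -> qderiv P t <= beta.
Proof.
  intros Hd Hg.
  assert (Hlin : 0 <= beta - qderiv P t); [| lra].
  apply (linear_coef_nonneg (qa P) _ d Hd); intros s Hs.
  specialize (Hargmax (t - s)).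
  rewrite !Hg, (qeval_taylor P t (t - s)) in Hargmax by lra; nra.
Qed.

Lemma argmax_slope_right (P : quad) (d : R) : 0 < d ->
  (forall x, t <= x < t + d -> g x = qeval P x) -> beta <= qderiv P t.
Proof.
  intros Hd Hg.
  assert (Hlin : 0 <= qderiv P t - beta); [| lra].
  apply (linear_coef_nonneg (qa P) _ d Hd); intros s Hs.
  specialize (Hargmax (t + s)).
  rewrite !Hg, (qeval_taylor P t (t + s)) in Hargmax by lra; nra.
Qed.

End ArgmaxSlope.

Section Piecewise.

Variables (g : R -> R) (N : nat) (p : nat -> quad) (tau : nat -> Rbar).
Hypothesis Hpw : piecewise_quadratic g N p tau.

Lemma piece_left_nbhd (k : nat) (t : R) : (1 <= k <= N)%nat ->
  Rbar_lt (tau (k - 1)%nat) t -> Rbar_le t (tau k) ->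
  exists d, 0 < d /\ forall x, t - d < x <= t -> g x = qeval (p k) x.
Proof.
  intros Hk Hl Hr; destruct (Rbar_lt_left_nbhd _ _ Hl) as [d [Hd Hnb]].
  exists d; split; [exact Hd | intros x Hx].
  apply Hpw; [exact Hk | split; [apply Hnb; lra |]].
  apply (Rbar_le_trans _ t); [simpl; lra | exact Hr].
Qed.

Lemma piece_right_nbhd (k : nat) (t : R) : (1 <= k <= N)%nat ->
  Rbar_le (tau (k - 1)%nat) t -> Rbar_lt t (tau k) ->
  exists d, 0 < d /\ forall x, t <= x < t + d -> g x = qeval (p k) x.
Proof.
  intros Hk Hl Hr; destruct (Rbar_lt_right_nbhd _ _ Hr) as [d [Hd Hnb]].
  exists d; split; [exact Hd | intros x Hx].
  apply Hpw; [exact Hk | split; [| apply Hnb; lra]].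
  apply (Rbar_le_trans _ t); [exact Hl | simpl; lra].
Qed.

Hypothesis Hcons : consistent g N p.
Variables (beta t : R).
Hypothesis Hargmax : forall a, beta * a - g a <= beta * t - g t.

Lemma argmax_not_inner_breakpoint (k : nat) : (1 <= k < N)%nat ->
  tau k <> Finite t.
Proof.
  intros Hk Ht.
  destruct Hpw as [_ [_ [_ [_ [Hmono [_ Hdistinct]]]]]].
  destruct Hcons as [_ Hmin].
  assert (Hprev : Rbar_lt (tau (k - 1)%nat) t).
  { rewrite <- Ht; replace k with (S (k - 1)) at 2 by lia; apply Hmono; lia. }
  assert (Hnext : Rbar_lt t (tau (S k))) by (rewrite <- Ht; apply Hmono; lia).
  destruct (piece_left_nbhd k t ltac:(lia) Hprev ltac:(rewrite Ht; simpl; lra))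
    as [dL [HdL HgP]].
  destruct (piece_right_nbhd (S k) t ltac:(lia)
              ltac:(replace (S k - 1)%nat with k by lia; rewrite Ht; simpl; lra) Hnext)
    as [dR [HdR HgQ]].
  apply (Hdistinct k ltac:(lia)).
  apply (qeval_eq_of_crossing _ _ t dL dR HdL HdR).
  - rewrite <- HgP, <- HgQ by lra; reflexivity.
  - pose proof (argmax_slope_left g beta t Hargmax _ dL HdL HgP).
    pose proof (argmax_slope_right g beta t Hargmax _ dR HdR HgQ); lra.
  - intros x Hx; rewrite <- HgP by lra; apply Hmin; lia.
  - intros x Hx; rewrite <- HgQ by lra; apply Hmin; lia.
Qed.

Lemma argmax_not_breakpoint (k : nat) : (k <= N)%nat -> Finite t <> tau k.
Proof.
  intros Hk Ht.
  destruct Hpw as [HN [_ [H0 [HNinf _]]]].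
  destruct (Nat.eq_dec k 0) as [-> | Hk0]; [congruence |].
  destruct (Nat.eq_dec k N) as [-> | HkN]; [congruence |].
  exact (argmax_not_inner_breakpoint k ltac:(lia) (eq_sym Ht)).
Qed.

End Piecewise.

Theorem lemma6 (g : R -> R) (N : nat) (p : nat -> quad) (tau : nat -> Rbar)
  (Hpw : piecewise_quadratic g N p tau) (Hcons : consistent g N p)
  (beta astar : R)
  (Hargmax : forall a, beta * a - g a <= beta * astar - g astar)
  (kstar : nat) (Hk : (1 <= kstar <= N)%nat) (Hin : in_piece tau kstar astar) :
  (Finite astar <> tau (kstar - 1)%nat /\ Finite astar <> tau kstar) /\
  (ell p kstar beta astar = g astar /\
   forall a, ell p kstar beta a <= g a).
Proof.
  pose proof (argmax_not_breakpoint g N p tau Hpw Hcons beta astar Hargmax) as Hnot.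
  assert (Hl : Finite astar <> tau (kstar - 1)%nat) by (apply Hnot; lia).
  assert (Hr : Finite astar <> tau kstar) by (apply Hnot; lia).
  split; [split; assumption |].
  destruct Hin as [Hle Hge].
  destruct (Rbar_le_lt_or_eq_dec _ _ Hle) as [Hlt | E]; [| congruence].
  destruct (Rbar_le_lt_or_eq_dec _ _ Hge) as [Hgt | E]; [| congruence].
  destruct (piece_left_nbhd g N p tau Hpw kstar astar Hk Hlt Hge) as [dL [HdL HgL]].
  destruct (piece_right_nbhd g N p tau Hpw kstar astar Hk Hle Hgt) as [dR [HdR HgR]].
  assert (Hslope : qderiv (p kstar) astar = beta).
  { pose proof (argmax_slope_left g beta astar Hargmax _ dL HdL HgL).
    pose proof (argmax_slope_right g beta astar Hargmax _ dR HdR HgR); lra. }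
  assert (Hconvex : 0 <= qa (p kstar)) by (apply Rlt_le, Hcons, Hk).
  assert (Hgt0 : g astar = qeval (p kstar) astar) by (apply HgL; lra).
  unfold ell; rewrite (conj_qeval_critical _ _ _ Hconvex Hslope); simpl.
  split; [rewrite Hgt0; ring |].
  intros a; specialize (Hargmax a); lra.
Qed.
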